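(* Let $\rho^a,\rho^b\in\mathbb R^M_{>0}$, $M_a=\{j\in M:\rho^a_j\ge\rho^b_j\}$ and $M_b=\{j\in M:\rho^a_j\le\rho^b_j\}$. Then $${\rm LW}^{{\rm OPT}(M_a,\rho^a)}+{\rm LW}^{{\rm OPT}(M_b,\rho^b)}\ \ge\ \frac12\bigl({\rm LW}^{{\rm OPT}(M,\rho^a)}+{\rm LW}^{{\rm OPT}(M,\rho^b)}\bigr).$$
   Context: Market model. Buyers $N_0=\{1,\dots,n\}$, sellers $M=\{1,\dots,m\}$, bipartite edge set $E\subseteq N_0\times M$; $E_S$ is the set of edges incident to participants in $S$ ($E_i=E_{\{i\}}$); $w(F)=\sum_{e\in F}w_e$. Each seller $j$ has a monotone submodular $f_j:2^{E_j}\to\mathbb R_+$ with $f_j(\emptyset)=0$, polymatroid $P_j=\{y\in\mathbb R^{E_j}_+:y(F)\le f_j(F)\ \forall F\subseteq E_j\}$ ($f_j(E_j)$ = her total amount of a homogeneous divisible good). Buyer $i$ has per-unit valuation $v_i>0$ and budget $B_i\ge0$. For a seller set $M'\subseteq M$ and seller valuations $\sigma\in\mathbb R^{M'}_{>0}$, consider the submarket with sellers $M'$, edges $E'=\{ij\in E:j\in M'\}$ and constraint $P_{M'}=\{w\in\mathbb R^{E'}_+: w|_{E_j}\in P_j\ \forall j\in M'\}$; for $w\in P_{M'}$ its liquid welfare is $\sum_{i\in N_0}\min(v_iw(E_i\cap E'),B_i)+\sum_{j\in M'}\sigma_j(f_j(E_j)-w(E_j))$, and ${\rm LW}^{{\rm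 OPT}(M',\sigma)}$ is the maximum of this over $w\in P_{M'}$. *)

From mathcomp Require Import classical_sets reals.
From mathcomp Require Import all_boot all_order all_algebra.
Set Implicit Arguments. Unset Strict Implicit. Unset Printing Implicit Defensive.
Import Order.TTheory GRing.Theory Num.Theory.
Local Open Scope ring_scope.

(* Buyers are 'I_n, sellers are 'I_m, edges are pairs (buyer, seller). *)
Section Market.
Variables (R : realType) (n m : nat).
Notation edge := ('I_n * 'I_m)%type.

Definition sedges (E : {set edge}) (j : 'I_m) : {set edge} := [set e in E | e.2 == j].
Definition bedges (E : {set edge}) (i : 'I_n) : {set edge} := [set e in E | e.1 == i].
Definition subedges (E : {set edge}) (M' : {set 'I_m}) : {set edge} :=
  [set e in E | e.2 \in M'].

(* f_j : 2^{E_j} -> R_+ is monotone submodular with f_j(emptyset) = 0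
   (only the values of f j on subsets of E_j are relevant). *)
Definition mono_submod_on (Ej : {set edge}) (g : {set edge} -> R) : Prop :=
  [/\ g set0 = 0,
      (forall A : {set edge}, A \subset Ej -> 0 <= g A),
      (forall A B : {set edge}, A \subset B -> B \subset Ej -> g A <= g B) &
      (forall A B : {set edge}, A \subset Ej -> B \subset Ej ->
                   g (A :|: B) + g (A :&: B) <= g A + g B)].

(* w in P_{M'}: w is a vector on E' (represented as a function vanishing
   outside E'), nonnegative, with w|_{E_j} in the polymatroid P_j for j in M'. *)
Definition feasible (E : {set edge}) (f : 'I_m -> {set edge} -> R)
  (M' : {set 'I_m}) (w : edge -> R) : Prop :=
  [/\ (forall e, e \notin subedges E M' -> w e = 0),
      (forall e, e \in subedges E M' -> 0 <= w e) &
      (forall j, j \in M' -> forall F : {set edge}, F \subset sedges E j ->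
                 \sum_(e in F) w e <= f j F)].

Definition LW (E : {set edge}) (f : 'I_m -> {set edge} -> R)
  (v B : 'I_n -> R) (M' : {set 'I_m}) (sigma : 'I_m -> R) (w : edge -> R) : R :=
  \sum_(i < n) Num.min (v i * \sum_(e in bedges E i :&: subedges E M') w e) (B i)
  + \sum_(j in M') sigma j * (f j (sedges E j) - \sum_(e in sedges E j) w e).

(* LW^{OPT(M', sigma)}: the maximum (= supremum) of LW over P_{M'} *)
Definition LWOPT (E : {set edge}) (f : 'I_m -> {set edge} -> R)
  (v B : 'I_n -> R) (M' : {set 'I_m}) (sigma : 'I_m -> R) : R :=
  reals.sup (fun x : R => exists w, feasible E f M' w /\ x = LW E f v B M' sigma w).

End Market.

From mathcomp Require Import classical_sets reals.
From mathcomp Require Import all_boot all_order all_algebra.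
From mathcomp Require Import lra.
Set Implicit Arguments.
Unset Strict Implicit.
Unset Printing Implicit Defensive.

Import Order.TTheory GRing.Theory Num.Theory.
Local Open Scope ring_scope.

(* Any allocation w of the whole market restricts to feasible allocations of
   M_a and M_b, and the two restrictions together account for all of its
   liquid welfare: a buyer's term min(v_i w(E_i), B_i) is subadditive in
   w(E_i), and every seller j lies in the submarket M_a or M_b whose valuation
   is max(rho^a_j, rho^b_j), so her unsold supply is valued there at least as
   high as under either rho^a or rho^b.  Hence for both
   sigma = rho^a and sigma = rho^b,
   LW^{OPT(M, sigma)} <= LW^{OPT(M_a, rho^a)} + LW^{OPT(M_b, rho^b)},
   and averaging the two bounds gives the claim. *)

Section SubadditiveBounds.
Variable R : realDomainType.

Lemma min_le_minD (a b c D : R) : 0 <= a -> 0 <= b -> 0 <= D -> c <= a + b ->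
  Num.min c D <= Num.min a D + Num.min b D.
Proof.
move=> a_ge0 b_ge0 D_ge0 c_le.
have minc_le_c : Num.min c D <= c by rewrite ge_min lexx.
have minc_le_D : Num.min c D <= D by rewrite ge_min lexx orbT.
by case: (leP a D) => _; case: (leP b D) => _; lra.
Qed.

Lemma ler_sum_cover (I : finType) (S X Y : {set I}) (g ga gb : I -> R) :
  S \subset X :|: Y ->
  {in S :&: X, forall i, g i <= ga i} -> {in S :&: Y, forall i, g i <= gb i} ->
  {in S, forall i, 0 <= ga i} -> {in S, forall i, 0 <= gb i} ->
  \sum_(i in S) g i <= \sum_(i in S :&: X) ga i + \sum_(i in S :&: Y) gb i.
Proof.
move=> /subsetP S_cover g_le_ga g_le_gb ga_ge0 gb_ge0.
have sum_setI C (h : I -> R) :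
    \sum_(i in S :&: C) h i = \sum_(i in S) (if i \in C then h i else 0).
  by rewrite -big_mkcondr; apply: eq_bigl => i; rewrite inE.
rewrite !sum_setI -big_split /=.
apply: ler_sum => i Si.
have [ga_i_ge0 gb_i_ge0] := (ga_ge0 i Si, gb_ge0 i Si).
have := S_cover i Si; rewrite inE.
case: (boolP (i \in X)) => iX; case: (boolP (i \in Y)) => iY //= _.
- by have := g_le_ga i; rewrite inE Si iX => /(_ isT); lra.
- by rewrite addr0 g_le_ga // inE Si.
- by rewrite add0r g_le_gb // inE Si.
Qed.

End SubadditiveBounds.

Section LiquidWelfare.
Variables (R : realType) (n m : nat) (E : {set 'I_n * 'I_m})
  (f : 'I_m -> {set 'I_n * 'I_m} -> R) (v B : 'I_n -> R).
Hypothesis f_ge0 :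
  forall j (F : {set 'I_n * 'I_m}), F \subset sedges E j -> 0 <= f j F.
Hypothesis v_ge0 : forall i, 0 <= v i.
Hypothesis B_ge0 : forall i, 0 <= B i.

Local Notation edge := ('I_n * 'I_m)%type.
Local Notation feasible := (feasible E f).
Local Notation LW := (LW E f v B).
Local Notation LWOPT := (LWOPT E f v B).

Definition restrict (M' : {set 'I_m}) (w : edge -> R) (e : edge) : R :=
  if e.2 \in M' then w e else 0.

Lemma subedgesS (M1 M2 : {set 'I_m}) :
  M1 \subset M2 -> subedges E M1 \subset subedges E M2.
Proof.
by move=> /subsetP M12; apply/subsetP => e; rewrite !inE => /andP[-> /M12].
Qed.

Lemma subedgesU (M1 M2 : {set 'I_m}) :
  subedges E (M1 :|: M2) = subedges E M1 :|: subedges E M2.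
Proof. by apply/setP => e; rewrite !inE andb_orr. Qed.

Lemma sedges_seller (j : 'I_m) (e : edge) : e \in sedges E j -> e.2 = j.
Proof. by rewrite inE => /andP[_ /eqP]. Qed.

Lemma feasible0 (M' : {set 'I_m}) : feasible M' (fun=> 0).
Proof. by split=> // j _ F F_sub; rewrite big1 // f_ge0. Qed.

Lemma feasible_restrict (M' : {set 'I_m}) (w : edge -> R) :
  feasible [set: 'I_m] w -> feasible M' (restrict M' w).
Proof.
case=> w_out w_ge0 w_cap; split.
- move=> e; rewrite inE /restrict; case: ifP => // _.
  by rewrite andbT => e_out; apply: w_out; rewrite !inE andbT.
- by move=> e; rewrite !inE /restrict => /andP[eE ->]; apply: w_ge0; rewrite !inE eE.
- move=> j jM' F /subsetP F_sub; rewrite (eq_bigr w) ?w_cap ?inE //; first exact/subsetP.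
  by move=> e /F_sub /sedges_seller; rewrite /restrict => ->; rewrite jM'.
Qed.

Lemma LW_restrict (M' : {set 'I_m}) (s : 'I_m -> R) (w : edge -> R) :
  LW M' s (restrict M' w) = LW M' s w.
Proof.
congr (_ + _).
  apply: eq_bigr => i _.
  congr (Num.min (_ * _) _); apply: eq_bigr => e.
  by rewrite !inE /restrict => /and3P[_ _ ->].
apply: eq_bigr => j jM'; congr (_ * (_ - _)); apply: eq_bigr => e /sedges_seller.
by rewrite /restrict => ->; rewrite jM'.
Qed.

Lemma LW_le_budgets_supplies (M' : {set 'I_m}) (s : 'I_m -> R) (w : edge -> R) :
  (forall j, 0 <= s j) -> feasible M' w ->
  LW M' s w <= \sum_(i < n) B i + \sum_(j in M') s j * f j (sedges E j).
Proof.
move=> s_ge0 [_ w_ge0 _]; apply: lerD.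
  by apply: ler_sum => i _; rewrite ge_min lexx orbT.
apply: ler_sum => j jM'; rewrite ler_wpM2l // gerBl.
by apply: sumr_ge0 => e e_j; apply: w_ge0; move: e_j; rewrite !inE => /andP[-> /eqP ->].
Qed.

Lemma LW_le_LWOPT (M' : {set 'I_m}) (s : 'I_m -> R) (w : edge -> R) :
  (forall j, 0 <= s j) -> feasible M' w -> LW M' s w <= LWOPT M' s.
Proof.
move=> s_ge0 w_feas; apply: ub_le_sup; last by exists w.
exists (\sum_(i < n) B i + \sum_(j in M') s j * f j (sedges E j)).
by move=> _ [w' [w'_feas ->]]; apply: LW_le_budgets_supplies.
Qed.

Lemma LW_le_split (Ma Mb : {set 'I_m}) (s sa sb : 'I_m -> R) (w : edge -> R) :
  Ma :|: Mb = [set: 'I_m] ->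
  {in Ma, forall j, s j <= sa j} -> {in Mb, forall j, s j <= sb j} ->
  (forall j, 0 <= sa j) -> (forall j, 0 <= sb j) ->
  feasible [set: 'I_m] w ->
  LW [set: 'I_m] s w <= LW Ma sa w + LW Mb sb w.
Proof.
move=> cover s_le_sa s_le_sb sa_ge0 sb_ge0 [_ w_ge0 w_cap].
have w_ge0_on M' : {in subedges E M', forall e, 0 <= w e}.
  by move=> e; rewrite inE => /andP[eE _]; apply: w_ge0; rewrite !inE eE.
rewrite /LW addrACA -big_split /=; apply: lerD.
  apply: ler_sum => i _; apply: min_le_minD => //.
  - by rewrite mulr_ge0 // sumr_ge0 // => e; rewrite inE => /andP[_ /w_ge0_on].
  - by rewrite mulr_ge0 // sumr_ge0 // => e; rewrite inE => /andP[_ /w_ge0_on].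
  rewrite -mulrDr ler_wpM2l //.
  have subI M' : bedges E i :&: subedges E [set: 'I_m] :&: subedges E M'
                 = bedges E i :&: subedges E M'.
    by rewrite -setIA; congr (_ :&: _); apply/setIidPr/subedgesS/subsetT.
  rewrite -(subI Ma) -(subI Mb).
  apply: (ler_sum_cover (X := subedges E Ma) (Y := subedges E Mb)) => //.
  - by rewrite -subedgesU cover subsetIr.
  - by move=> e; rewrite inE => /andP[_ /w_ge0_on].
  - by move=> e; rewrite inE => /andP[_ /w_ge0_on].
have residual_ge0 j : 0 <= f j (sedges E j) - \sum_(e in sedges E j) w e.
  by rewrite subr_ge0 w_cap ?inE.
rewrite -(setTI Ma) -(setTI Mb).
apply: (ler_sum_cover (X := Ma) (Y := Mb)) => [|j|j|j _|j _].
- by rewrite cover.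
- by rewrite setTI => /s_le_sa s_le; rewrite ler_wpM2r.
- by rewrite setTI => /s_le_sb s_le; rewrite ler_wpM2r.
- exact: mulr_ge0.
- exact: mulr_ge0.
Qed.

Lemma LWOPT_le_split (Ma Mb : {set 'I_m}) (s sa sb : 'I_m -> R) :
  Ma :|: Mb = [set: 'I_m] ->
  {in Ma, forall j, s j <= sa j} -> {in Mb, forall j, s j <= sb j} ->
  (forall j, 0 <= sa j) -> (forall j, 0 <= sb j) ->
  LWOPT [set: 'I_m] s <= LWOPT Ma sa + LWOPT Mb sb.
Proof.
move=> cover s_le_sa s_le_sb sa_ge0 sb_ge0; apply: ge_sup.
  by exists (LW [set: 'I_m] s (fun=> 0)), (fun=> 0); split=> //; apply: feasible0.
move=> _ [w [w_feas ->]].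
apply: le_trans (LW_le_split cover s_le_sa s_le_sb sa_ge0 sb_ge0 w_feas) _.
rewrite -(LW_restrict Ma) -(LW_restrict Mb).
by apply: lerD; apply: LW_le_LWOPT => //; apply: feasible_restrict.
Qed.

End LiquidWelfare.

Theorem lemma4p7 (R : realType) (n m : nat) (E : {set 'I_n * 'I_m})
  (f : 'I_m -> {set 'I_n * 'I_m} -> R) (v B : 'I_n -> R)
  (rhoa rhob : 'I_m -> R) :
  (forall j, mono_submod_on (sedges E j) (f j)) ->
  (forall i, 0 < v i) -> (forall i, 0 <= B i) ->
  (forall j, 0 < rhoa j) -> (forall j, 0 < rhob j) ->
  LWOPT E f v B [set j | rhob j <= rhoa j] rhoa
  + LWOPT E f v B [set j | rhoa j <= rhob j] rhob
  >= (LWOPT E f v B [set: 'I_m] rhoa + LWOPT E f v B [set: 'I_m] rhob) / 2.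
Proof.
move=> f_submod v_gt0 B_ge0 rhoa_gt0 rhob_gt0.
have f_ge0 j (F : {set 'I_n * 'I_m}) : F \subset sedges E j -> 0 <= f j F.
  by case: (f_submod j) => _ f_ge0 _ _; apply: f_ge0.
have v_ge0 i : 0 <= v i by apply: ltW.
have rhoa_ge0 j : 0 <= rhoa j by apply: ltW.
have rhob_ge0 j : 0 <= rhob j by apply: ltW.
set Ma := [set j | rhob j <= rhoa j]; set Mb := [set j | rhoa j <= rhob j].
have cover : Ma :|: Mb = [set: 'I_m] by apply/setP => j; rewrite !inE le_total.
have rhob_le_a : {in Ma, forall j, rhob j <= rhoa j} by move=> j; rewrite inE.
have rhoa_le_b : {in Mb, forall j, rhoa j <= rhob j} by move=> j; rewrite inE.
have split_a :
    LWOPT E f v B [set: 'I_m] rhoa <= LWOPT E f v B Ma rhoa + LWOPT E f v B Mb rhob.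
  by apply: LWOPT_le_split => // j _.
have split_b :
    LWOPT E f v B [set: 'I_m] rhob <= LWOPT E f v B Ma rhoa + LWOPT E f v B Mb rhob.
  by apply: LWOPT_le_split => // j _.
lra.
Qed.
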